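(* Let $S$ be an infinite set and $\mathcal{F}\subseteq 2^S$ nontrivial and closed under finite unions. Let $\mathbf{A}=(A_1,\dots,A_k)$ be a classification problem with $k>1$. Then $\mathbf{A}\in\mathit{core}_k(\mathcal{F})$ if and only if $A_1\cup\dots\cup A_k$ is $\mathcal{F}$-cohesive.
   Context: $\mathcal{F}$ is nontrivial if $\emptyset,S\in\mathcal{F}$ and for all $Q\in\mathcal{F}$ and finite $E\subseteq S$ both $Q\cup E\in\mathcal{F}$ and $Q\setminus E\in\mathcal{F}$. A classification problem is a vector $(A_1,\dots,A_k)$, $k\ge1$, of pairwise disjoint infinite subsets of $S$, of length $k$. For vectors $\mathbf{B}=(B_1,\dots,B_m)$, $\mathbf{Q}=(Q_1,\dots,Q_k)$, $\mathbf{B}\le\mathbf{Q}$ means $1\le m\le k$ and there is an injective $\sigma:\{1,\dots,m\}\to\{1,\dots,k\}$ with $B_i\subseteq Q_{\sigma(i)}$. An $\mathcal{F}$-partition is a vector of pairwise disjoint members of $\mathcal{F}$ whose union is $S$. $\mathit{class}_k(\mathcal{F})$: classification problems $\mathbf{A}$ of length $k$ with $\mathbf{A}\le\mathbf{Q}$ for some $\mathcal{F}$-partition $\mathbf{Q}$ of length $k$. For $k>1$, $\mathit{core}_k(\mathcal{F})$ is the set of classification problems $\mathbf{A}$ of length $k$ such that every classification problem $\mathbf{A}'\le\mathbf{A}$ with $|\mathbf{A}'|>1$ satisfies $\mathbf{A}'\notin\mathit{class}_{|\mathbf{A}'|}(\mathcal{F})$. A set $A\subseteq S$ is $\mathcal{F}$-cohesive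 if $A$ is infinite and for every $Q$ with $Q\in\mathcal{F}$ and $S\setminus Q\in\mathcal{F}$, either $A\cap Q$ or $A\setminus Q$ is finite. *)

From mathcomp Require Import all_boot.
From mathcomp Require Import boolp classical_sets cardinality.
Set Implicit Arguments. Unset Strict Implicit. Unset Printing Implicit Defensive.
Local Open Scope classical_set_scope.

Section Defs.
Variable S : Type.
Implicit Types (F : set (set S)).

Definition nontrivial F : Prop :=
  F set0 /\ F setT /\
  (forall Q E : set S, F Q -> finite_set E -> F (Q `|` E) /\ F (Q `\` E)).

(* F closed under finite unions (binary unions; the empty union set0 is in F
   by nontriviality) *)
Definition union_closed F : Prop :=
  forall Q1 Q2 : set S, F Q1 -> F Q2 -> F (Q1 `|` Q2).

Definition pairwise_disjoint k (A : 'I_k -> set S) : Prop :=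
  forall i j : 'I_k, i != j -> A i `&` A j = set0.

Definition classif_problem k (A : 'I_k -> set S) : Prop :=
  (1 <= k)%N /\ pairwise_disjoint A /\ (forall i, infinite_set (A i)).

Definition vec_le m k (B : 'I_m -> set S) (Q : 'I_k -> set S) : Prop :=
  (1 <= m)%N /\ (m <= k)%N /\
  exists sigma : 'I_m -> 'I_k, injective sigma /\ forall i, B i `<=` Q (sigma i).

Definition F_partition F k (Q : 'I_k -> set S) : Prop :=
  (forall i, F (Q i)) /\ pairwise_disjoint Q /\ \bigcup_(i in [set: 'I_k]) Q i = setT.

Definition in_class F k (A : 'I_k -> set S) : Prop :=
  classif_problem A /\ exists Q : 'I_k -> set S, F_partition F Q /\ vec_le A Q.

Definition in_core F k (A : 'I_k -> set S) : Prop :=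
  (1 < k)%N /\ classif_problem A /\
  forall m (A' : 'I_m -> set S), classif_problem A' -> vec_le A' A -> (1 < m)%N ->
    ~ in_class F A'.

Definition cohesive F (A : set S) : Prop :=
  infinite_set A /\
  forall Q : set S, F Q -> F (~` Q) -> finite_set (A `&` Q) \/ finite_set (A `\` Q).
End Defs.

From mathcomp Require Import all_boot.
From mathcomp Require Import boolp classical_sets cardinality.
Set Implicit Arguments. Unset Strict Implicit.
Local Open Scope classical_set_scope.

(* If A is in the core, no clopen Q (Q and ~` Q in F) can split two members:
   their infinite halves A i `&` Q and A j `&` ~` Q would form a 2-problem
   below A classified by the partition (Q, ~` Q).  Conversely, if the union U
   is cohesive and a subproblem B of length m > 1 were classified by an
   F-partition Q, then the block Q_0 containing B_0 is clopen (its complement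
   is a finite union of blocks), so U meets Q_0 or ~` Q_0 finitely; but the
   infinite sets B_0 and B_1 lie in U on opposite sides of Q_0. *)

Definition pair2 (T : Type) (x y : T) (t : 'I_2) : T :=
  if t == ord0 then x else y.

Lemma ord2P (t : 'I_2) : t = ord0 \/ t = ord_max.
Proof. by case: t => [[|[|]]] // ?; [left | right]; apply: val_inj. Qed.

Lemma pair2_inj (T : eqType) (x y : T) : x != y -> injective (pair2 x y).
Proof.
move=> xy t t'.
case: (ord2P t) => ->; case: (ord2P t') => -> //; rewrite /pair2 /= => e.
- by rewrite e eqxx in xy.
- by rewrite e eqxx in xy.
Qed.

Section Problems.
Variable S : Type.
Implicit Types (F : set (set S)) (X Y Q : set S).

Lemma pairwise_disjoint_pair2 X Y :
  X `&` Y = set0 -> pairwise_disjoint (pair2 X Y).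
Proof.
move=> XY t t'.
case: (ord2P t) => ->; case: (ord2P t') => -> //; rewrite /pair2 /= => _.
by rewrite setIC.
Qed.

Lemma classif_problem_pair2 X Y :
  X `&` Y = set0 -> infinite_set X -> infinite_set Y ->
  classif_problem (pair2 X Y).
Proof.
move=> XY Xinf Yinf; split=> //; split; first exact: pairwise_disjoint_pair2.
by move=> t; rewrite /pair2; case: ifP.
Qed.

Lemma vec_le_pointwise m (B Q : 'I_m -> set S) :
  (0 < m)%N -> (forall i, B i `<=` Q i) -> vec_le B Q.
Proof. by move=> m0 BQ; do 2!split=> //; exists id; split; first exact: inj_id. Qed.

Lemma vec_le_pair2 k (A : 'I_k -> set S) i j X Y :
  (1 < k)%N -> i != j -> X `<=` A i -> Y `<=` A j -> vec_le (pair2 X Y) A.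
Proof.
move=> k1 ij XA YA; do 2!split=> //.
by exists (pair2 i j); split; [exact: pair2_inj | move=> t; rewrite /pair2; case: ifP].
Qed.

Lemma F_partition_pair2 F Q : F Q -> F (~` Q) -> F_partition F (pair2 Q (~` Q)).
Proof.
move=> FQ FnQ; split; first by move=> t; rewrite /pair2; case: ifP.
split; first by apply: pairwise_disjoint_pair2; rewrite setICr.
apply/seteqP; split=> // x _; have [Qx|nQx] := pselect (Q x).
- by exists ord0.
- by exists ord_max.
Qed.

Lemma in_class_pair2 F Q X Y :
  F Q -> F (~` Q) -> X `<=` Q -> Y `<=` ~` Q ->
  infinite_set X -> infinite_set Y -> in_class F (pair2 X Y).
Proof.
move=> FQ FnQ XQ YnQ Xinf Yinf.
have XY : X `&` Y = set0.
  by apply/seteqP; split=> // x [/XQ Qx /YnQ].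
split; first exact: classif_problem_pair2.
exists (pair2 Q (~` Q)); split; first exact: F_partition_pair2.
by apply: vec_le_pointwise => // t; rewrite /pair2; case: ifP.
Qed.

Lemma infinite_bigcup_ord k (B : 'I_k -> set S) :
  infinite_set (\bigcup_(i in [set: 'I_k]) B i) -> exists i, infinite_set (B i).
Proof.
move=> Binf; apply: contrapT => noinf; apply: Binf.
apply: bigcup_finite; first exact: finite_finset.
by move=> i _; apply: contrapT => Biinf; apply: noinf; exists i.
Qed.

Lemma infinite_setI_or_setIC X Q :
  infinite_set X -> infinite_set (X `&` Q) \/ infinite_set (X `&` ~` Q).
Proof.
move=> Xinf; apply: contrapT => /not_orP[/contrapT XQ /contrapT XnQ].
by apply: Xinf; rewrite -(setIT X) -(setUCr Q) setIUr finite_setU.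
Qed.

Lemma union_closed_bigcup F (I : finType) (Q : I -> set S) (P : pred I) :
  F set0 -> union_closed F -> (forall i, F (Q i)) ->
  F (\bigcup_(i in [set i | P i]) Q i).
Proof.
move=> F0 FU FQ.
have -> : [set i | P i] = [set i | (i \in enum I) && P i].
  by apply/seteqP; split=> i /=; rewrite mem_enum.
by rewrite bigcup_seq_cond; apply: big_ind.
Qed.

Lemma F_partition_setC F k (Q : 'I_k -> set S) t :
  F set0 -> union_closed F -> F_partition F Q -> F (~` Q t).
Proof.
move=> F0 FU [FQ [Qdisj Qcov]].
suff -> : ~` Q t = \bigcup_(s in [set s | s != t]) Q s.
  exact: union_closed_bigcup.
apply/seteqP; split=> x.
- move=> nQtx; have : [set: S] x by [].
  rewrite -Qcov => -[s _ Qsx]; exists s => //=.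
  by apply/eqP => st; apply: nQtx; rewrite -st.
- move=> [s /= st Qsx] Qtx.
  by have : (Q s `&` Q t) x by []; rewrite Qdisj.
Qed.

Definition no_class_below F k (A : 'I_k -> set S) : Prop :=
  forall m (A' : 'I_m -> set S), classif_problem A' -> vec_le A' A -> (1 < m)%N ->
    ~ in_class F A'.

Lemma no_class_below_separation F k (A : 'I_k -> set S) Q i j :
  (1 < k)%N -> no_class_below F A -> F Q -> F (~` Q) -> i != j ->
  infinite_set (A i `&` Q) -> infinite_set (A j `&` ~` Q) -> False.
Proof.
move=> k1 noclass FQ FnQ ij AiQ AjnQ.
have IQ : A i `&` Q `<=` Q by move=> x [].
have InQ : A j `&` ~` Q `<=` ~` Q by move=> x [].
have cls := in_class_pair2 FQ FnQ IQ InQ AiQ AjnQ.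
apply: (noclass _ _ (proj1 cls) _ _ cls) => //.
by apply: vec_le_pair2 k1 ij _ _ => x [].
Qed.

Lemma separated_pair k (A : 'I_k -> set S) Q :
  (1 < k)%N -> (forall i, infinite_set (A i)) ->
  infinite_set ((\bigcup_(i in [set: 'I_k]) A i) `&` Q) ->
  infinite_set ((\bigcup_(i in [set: 'I_k]) A i) `&` ~` Q) ->
  exists i j, [/\ i != j, infinite_set (A i `&` Q) & infinite_set (A j `&` ~` Q)].
Proof.
move=> k1 Ainf; rewrite !setI_bigcupl.
move=> /infinite_bigcup_ord[i AiQ] /infinite_bigcup_ord[j AjnQ].
have [ij | ij] := eqVneq i j; last by exists i, j.
subst j.
have [l li] : exists l : 'I_k, l != i.
  have [->|ne] := eqVneq i (Ordinal k1); last by exists (Ordinal k1); rewrite eq_sym.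
  by exists (Ordinal (ltnW k1)).
have [AlQ|AlnQ] := infinite_setI_or_setIC Q (Ainf l).
- by exists l, i.
- by exists i, l; rewrite eq_sym.
Qed.

Lemma no_class_below_cohesive F k (A : 'I_k -> set S) :
  (1 < k)%N -> (forall i, infinite_set (A i)) -> no_class_below F A ->
  cohesive F (\bigcup_(i in [set: 'I_k]) A i).
Proof.
move=> k1 Ainf noclass; split.
  apply: contra_not (Ainf (Ordinal (ltnW k1))) => /sub_finite_set; apply.
  by move=> x Ax; exists (Ordinal (ltnW k1)).
move=> Q FQ FnQ; apply: contrapT => /not_orP[UQ]; rewrite setDE => UnQ.
have [i [j [ij AiQ AjnQ]]] := separated_pair k1 Ainf UQ UnQ.
exact: no_class_below_separation k1 noclass FQ FnQ ij AiQ AjnQ.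
Qed.

Lemma cohesive_not_in_class F (U : set S) m (B : 'I_m -> set S) :
  F set0 -> union_closed F -> cohesive F U -> (1 < m)%N ->
  (forall i, infinite_set (B i)) -> (forall i, B i `<=` U) -> ~ in_class F B.
Proof.
move=> F0 FU [_ Ucoh] m1 Binf BU [_ [Q [Qpart [_ [_ [tau [tauinj BQ]]]]]]].
pose b0 : 'I_m := Ordinal (ltnW m1); pose b1 : 'I_m := Ordinal m1.
have tau01 : tau b1 != tau b0 by apply/eqP => /tauinj/(congr1 val).
have B1nQ : B b1 `<=` ~` Q (tau b0).
  move=> x B1x Q0x; have [_ [Qdisj _]] := Qpart.
  have : (Q (tau b1) `&` Q (tau b0)) x by split=> //; apply: BQ.
  by rewrite Qdisj.
have [FQ _] := Qpart.
case: (Ucoh _ (FQ (tau b0)) (F_partition_setC _ F0 FU Qpart)) => Ufin.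
- apply: (Binf b0 (sub_finite_set _ Ufin)) => x B0x.
  by split; [exact: (BU b0) | exact: (BQ b0)].
- apply: (Binf b1 (sub_finite_set _ Ufin)) => x B1x.
  by split; [exact: (BU b1) | exact: B1nQ].
Qed.

End Problems.

Theorem theorem3p5 (S : Type) (F : set (set S)) :
  infinite_set (@setT S) -> nontrivial F -> union_closed F ->
  forall (k : nat) (A : 'I_k -> set S), classif_problem A -> (1 < k)%N ->
  (in_core F A <-> cohesive F (\bigcup_(i in [set: 'I_k]) A i)).
Proof.
move=> _ [F0 _] FU k A Acp k1; have [_ [_ Ainf]] := Acp.
split=> [[_ [_ noclass]] | Ucoh]; first exact: no_class_below_cohesive.
split=> //; split=> // m B [_ [_ Binf]] [_ [_ [sigma [_ BA]]]] m1.
apply: cohesive_not_in_class F0 FU Ucoh m1 Binf _ => i x Bix.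
by exists (sigma i) => //; apply: BA.
Qed.
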